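(* For $i\in[2]$, let $A^ix^i+b^iy\le d^i$ be totally dual integral inequality systems in variables $x^i\in\mathbb{R}^{n_i}$ and a common scalar variable $y\in\mathbb{R}$, where $A^i\in\mathbb{Z}^{m_i\times n_i}$ and $b^i,d^i\in\mathbb{Z}^{m_i}$, and suppose each of these systems implies $0\le y\le1$. Then the combined system $A^1x^1+b^1y\le d^1$, $A^2x^2+b^2y\le d^2$ (in the variables $(x^1,x^2,y)$) is totally dual integral.
   Context: A system $Ax\le b$ with rational data is totally dual integral if for every integral objective $w$ for which $\max\{w^\top x: Ax\le b\}$ is finite, the dual $\min\{b^\top u: A^\top u=w,\ u\ge0\}$ has an integral optimal solution. *)

From HB Require Import structures.
From mathcomp Require Import all_boot all_order all_algebra.
Set Implicit Arguments. Unset Strict Implicit. Unset Printing Implicit Defensive.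
Import Order.TTheory GRing.Theory Num.Theory.
Local Open Scope ring_scope.

Definition intmx (R : realFieldType) m n (A : 'M[int]_(m, n)) : 'M[R]_(m, n) :=
  map_mx (fun z : int => z%:~R) A.

Definition feasible (R : realFieldType) m n (A : 'M[int]_(m, n)) (d : 'cV[int]_m)
  (x : 'cV[R]_n) : Prop :=
  forall i : 'I_m, (intmx R A *m x) i ord0 <= (intmx R d) i ord0.

(* Total dual integrality of A x <= d over R: for every integral w such that
   max { w^T x : A x <= d } is finite (the system is feasible and w^T x is
   bounded above on it), the dual min { d^T u : A^T u = w, u >= 0 } has an
   integral optimal solution. *)
Definition TDI (R : realFieldType) m n (A : 'M[int]_(m, n)) (d : 'cV[int]_m) : Prop :=
  forall w : 'cV[int]_n,
    (exists x : 'cV[R]_n, feasible A d x) ->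
    (exists M : R, forall x : 'cV[R]_n, feasible A d x -> ((intmx R w)^T *m x) ord0 ord0 <= M) ->
    exists u : 'cV[int]_m,
      (forall i, 0 <= u i ord0) /\ A^T *m u = w /\
      (forall v : 'cV[R]_m, (forall i, 0 <= v i ord0) -> (intmx R A)^T *m v = intmx R w ->
         ((intmx R d)^T *m intmx R u) ord0 ord0 <= ((intmx R d)^T *m v) ord0 ord0).

(* The system A x + b y <= d in variables (x, y), x in R^n, y in R:
   coefficient matrix [A | b], variable vector of size n + 1 with y last. *)
Definition sysxy m n (A : 'M[int]_(m, n)) (b : 'cV[int]_m) : 'M[int]_(m, n + 1) :=
  row_mx A b.

Definition implies_y01 (R : realFieldType) m n (A : 'M[int]_(m, n)) (b d : 'cV[int]_m) : Prop :=
  forall z : 'cV[R]_(n + 1), feasible (sysxy A b) d z ->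
    0 <= z (rshift n (ord0 : 'I_1)) ord0 <= 1.

Definition combined m1 m2 n1 n2 (A1 : 'M[int]_(m1, n1)) (b1 : 'cV[int]_m1)
  (A2 : 'M[int]_(m2, n2)) (b2 : 'cV[int]_m2) : 'M[int]_(m1 + m2, n1 + n2 + 1) :=
  col_mx (row_mx (row_mx A1 0) b1) (row_mx (row_mx 0 A2) b2).

From HB Require Import structures.
From mathcomp Require Import all_boot all_order all_algebra.
From mathcomp Require Import ring lra.
Import Order.TTheory GRing.Theory Num.Theory.
Local Open Scope ring_scope.
Set Implicit Arguments. Unset Strict Implicit. Unset Printing Implicit Defensive.

(* Let v be an optimal dual solution of the combined system, Q_i the value of its i-th
   block and t_1 + t_2 = c the split it induces of the (integral) coefficient c of y.
   Since 0 <= y <= 1, the optimum V_i(s) of block i for the coefficient s of y satisfies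
   V_i(s) <= Q_i + max(0, s - t_i), and by total dual integrality V_i(s) is the value of
   an integral dual. With k <= t_1 <= k + 1 integral, either V_1(k + 1) >= V_1(k) + 1, and
   then V_1(k) + V_2(c - k) <= Q_1 + Q_2, or V_1(k + 1) <= V_1(k), and then
   V_1(k + 1) + V_2(c - k - 1) <= Q_1 + Q_2; stacking the two integral duals gives an
   optimal integral dual of the combined system.
   Over an arbitrary ordered field, strong duality comes from Fourier-Motzkin
   elimination, which also yields a rational optimal dual: this is what provides the
   integer k, as the field need not be archimedean. *)

Notation "''[' u , v ]" := (((u)^T *m (v)) ord0 ord0) : ring_scope.

Section Integrality.
Variable R : realFieldType.

Definition is_int (x : R) : Prop := exists z : int, x = z%:~R.

Lemma is_int_intr (z : int) : is_int z%:~R. Proof. by exists z. Qed.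
Lemma is_int0 : is_int 0. Proof. exact: (is_int_intr 0). Qed.
Lemma is_int1 : is_int 1. Proof. exact: (is_int_intr 1). Qed.
Lemma is_intN x : is_int x -> is_int (- x).
Proof. by move=> [a ->]; exists (- a); rewrite mulrNz. Qed.
Lemma is_intD x y : is_int x -> is_int y -> is_int (x + y).
Proof. by move=> [a ->] [b ->]; exists (a + b); rewrite intrD. Qed.
Lemma is_intM x y : is_int x -> is_int y -> is_int (x * y).
Proof. by move=> [a ->] [b ->]; exists (a * b); rewrite intrM. Qed.

Lemma is_int_sum (I : finType) (F : I -> R) :
  (forall i, is_int (F i)) -> is_int (\sum_i F i).
Proof. by move=> FZ; apply: (big_ind is_int) => //; [exact: is_int0 | exact: is_intD]. Qed.

Lemma exists_floor (D : int) (x : R) :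
  0 < D -> is_int (D%:~R * x) -> exists k : int, k%:~R <= x <= k%:~R + 1.
Proof.
move=> D_gt0 [N DxN]; exists (N %/ D)%Z.
have DR_gt0 : 0 < D%:~R :> R by rewrite ltr0z.
have xE : x = (N %/ D)%Z%:~R + (N %% D)%Z%:~R / D%:~R.
  apply: (mulfI (lt0r_neq0 DR_gt0)); rewrite DxN {1}(divz_eq N D) intrD intrM.
  by field; rewrite lt0r_neq0.
have r_ge0 : 0 <= (N %% D)%Z by rewrite modz_ge0 // lt0r_neq0.
rewrite xE lerDl lerD2l divr_ge0 ?ler0z ?(ltW D_gt0) //=.
by rewrite ler_pdivrMr // mul1r ler_int ltW // ltz_pmod.
Qed.

End Integrality.

Section FourierMotzkin.
Variable R : realFieldType.

Lemma exists_between (I : finType) (L U : pred I) (lo hi : I -> R) :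
  (forall q p, L q -> U p -> lo q <= hi p) ->
  exists x, (forall q, L q -> lo q <= x) /\ (forall p, U p -> x <= hi p).
Proof.
move=> lo_hi; case: (pickP L) => [q0 Lq0 | L0].
  case: (arg_maxP lo Lq0) => q Lq q_max.
  by exists (lo q); split=> [q' /q_max | p /(lo_hi q p Lq)].
case: (pickP U) => [p0 Up0 | U0].
  case: (arg_minP hi Up0) => p Up p_min.
  by exists (hi p); split=> [q | p' /p_min]; rewrite ?L0.
by exists 0; split=> i; rewrite ?L0 ?U0.
Qed.

Lemma sum_delta (I : finType) (p : I) (F : I -> R) : \sum_i (i == p)%:R * F i = F p.
Proof. by rewrite (bigD1 p) //= eqxx mul1r big1 ?addr0 // => i /negbTE->; rewrite mul0r. Qed.

Lemma exchange_sum_mul (I J : finType) (f : J -> R) (g : J -> I -> R) (h : I -> R) :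
  \sum_i (\sum_j f j * g j i) * h i = \sum_j f j * \sum_i g j i * h i.
Proof.
under eq_bigr do rewrite mulr_suml.
rewrite exchange_big; apply: eq_bigr => j _; rewrite mulr_sumr.
by apply: eq_bigr => i _; rewrite mulrA.
Qed.

(* A pair (p, q) with [c p > 0 > c q] combines rows p and q so as to cancel the
   coefficients [c]; an [r] with [c r = 0] keeps row r; the other indices are dummies. *)
Definition elim_mult (I : finType) (c : I -> R) (j : (I * I + I)%type) (i : I) : R :=
  match j with
  | inl (p, q) =>
      if (0 < c p) && (c q < 0) then - c q * (i == p)%:R + c p * (i == q)%:R else 0
  | inr r => if c r == 0 then (i == r)%:R else 0
  end.

Section ElimMult.
Variables (I : finType) (c : I -> R).

Lemma elim_mult_ge0 j i : 0 <= elim_mult c j i.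
Proof.
case: j => [[p q] | r] /=; last by case: ifP; rewrite ?ler0n.
case: ifP => // /andP[cp_gt0 cq_lt0].
by rewrite addr_ge0 ?mulr_ge0 ?ler0n ?oppr_ge0 ?(ltW cp_gt0) ?(ltW cq_lt0).
Qed.

Lemma elim_mult_int j i : (forall i, is_int (c i)) -> is_int (elim_mult c j i).
Proof.
move=> cZ; have deltaZ k : is_int (i == k)%:R.
  by case: (i == k); [exact: is_int1 | exact: is_int0].
case: j => [[p q] | r] /=; case: ifP => _; try exact: is_int0.
  by apply: is_intD; apply: is_intM => //; apply: is_intN.
exact: deltaZ.
Qed.

Lemma elim_mult_sum j (F : I -> R) :
  \sum_i elim_mult c j i * F i =
  match j with
  | inl (p, q) => if (0 < c p) && (c q < 0) then - c q * F p + c p * F q else 0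
  | inr r => if c r == 0 then F r else 0
  end.
Proof.
case: j => [[p q] | r] /=; case: ifP => _; rewrite ?sum_delta //;
  try by rewrite big1 // => i _; rewrite mul0r.
by under eq_bigr do rewrite mulrDl -!mulrA; rewrite big_split -!mulr_sumr !sum_delta.
Qed.

Lemma elim_mult_cancel j : \sum_i elim_mult c j i * c i = 0.
Proof.
rewrite elim_mult_sum; case: j => [[p q] | r] /=; case: ifP => //.
  by rewrite mulNr [c q * _]mulrC addNr.
by move/eqP.
Qed.

Lemma elim_mult_solvable (r : I -> R) :
  (forall j, 0 <= \sum_i elim_mult c j i * r i) -> exists x, forall i, c i * x <= r i.
Proof.
move=> r_comb.
have lo_hi q p : c q < 0 -> 0 < c p -> r q / c q <= r p / c p.
  move=> cq_lt0 cp_gt0.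
  have cpq_gt0 : 0 < c p * - c q by rewrite mulr_gt0 ?oppr_gt0.
  rewrite -subr_ge0 -(pmulr_rge0 _ cpq_gt0).
  have -> : c p * - c q * (r p / c p - r q / c q) = - c q * r p + c p * r q.
    by field; rewrite ltr0_neq0 // lt0r_neq0.
  by have := r_comb (inl (p, q)); rewrite elim_mult_sum /= cp_gt0 cq_lt0.
have [x [x_lo x_hi]] := exists_between lo_hi.
exists x => i; case: (ltgtP (c i) 0) => ci.
- by rewrite mulrC -ler_ndivrMr // x_lo.
- by rewrite mulrC -ler_pdivlMr // x_hi.
- by have := r_comb (inr i); rewrite elim_mult_sum /= ci eqxx mul0r.
Qed.

End ElimMult.

Definition farkas_mults (I J : finType) n (a : I -> 'I_n -> R) (mu : J -> I -> R) : Prop :=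
  [/\ forall j i, 0 <= mu j i /\ is_int (mu j i),
      forall j k, \sum_i mu j i * a i k = 0 &
      forall b, (forall j, 0 <= \sum_i mu j i * b i) ->
        exists z : 'I_n -> R, forall i, \sum_k a i k * z k <= b i].

Lemma farkas_mults_id (I : finType) (a : I -> 'I_0 -> R) :
  farkas_mults a (fun j i => (i == j)%:R).
Proof.
split=> [j i | j [] // | b b_ge0].
  by case: (i == j); split; rewrite ?ler01 ?lexx //; [exact: is_int1 | exact: is_int0].
by exists (fun _ => 0) => i; rewrite big_ord0; have := b_ge0 i; rewrite sum_delta.
Qed.

Lemma farkas_mults_elim n (I J : finType) (a : I -> 'I_n.+1 -> R)
    (mu : J -> (I * I + I)%type -> R) :
  (forall i k, is_int (a i k)) ->
  farkas_mults (fun j k => \sum_i elim_mult (a^~ ord0) j i * a i (lift ord0 k)) mu ->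
  farkas_mults a (fun j i => \sum_j1 mu j j1 * elim_mult (a^~ ord0) j1 i).
Proof.
set c := a^~ ord0 => aZ [mu_ok mu_cancel mu_solve]; split.
- move=> j i; split.
    by apply: sumr_ge0 => j1 _; rewrite mulr_ge0 ?elim_mult_ge0 //; case: (mu_ok j j1).
  apply: is_int_sum => j1; apply: is_intM; first by case: (mu_ok j j1).
  by apply: elim_mult_int => i'; exact: aZ.
- move=> j k; rewrite exchange_sum_mul; case: (unliftP ord0 k) => [k'|] ->.
    exact: mu_cancel.
  by rewrite big1 // => j1 _; rewrite elim_mult_cancel mulr0.
- move=> b b_comb.
  have [z' z'_sol] := mu_solve (fun j1 => \sum_i elim_mult c j1 i * b i)
    (fun j => ltac:(by rewrite -exchange_sum_mul)).
  have [x x_sol] : exists x, forall i, c i * x <= b i - \sum_k a i (lift ord0 k) * z' k.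
    apply: elim_mult_solvable => j1; have := z'_sol j1.
    rewrite exchange_sum_mul -subr_ge0 -sumrB.
    by under eq_bigr do rewrite -mulrBr.
  exists (fun k => if unlift ord0 k is Some k' then z' k' else x) => i.
  rewrite big_ord_recl unlift_none; under eq_bigr do rewrite liftK.
  by have := x_sol i; rewrite /c; lra.
Qed.

Lemma exists_farkas_mults n (I : finType) (a : I -> 'I_n -> R) :
  (forall i k, is_int (a i k)) -> exists (J : finType) (mu : J -> I -> R), farkas_mults a mu.
Proof.
elim: n I a => [|n IHn] I a aZ.
  by exists I, (fun j i => (i == j)%:R); exact: farkas_mults_id.
have [|J [mu mu_ok]] := IHn _ (fun j k => \sum_i elim_mult (a^~ ord0) j i * a i (lift ord0 k)).
  move=> j k; apply: is_int_sum => i; apply: is_intM => //.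
  by apply: elim_mult_int => i'; exact: aZ.
by exists J, (fun j i => \sum_j1 mu j j1 * elim_mult (a^~ ord0) j1 i); exact: farkas_mults_elim.
Qed.

End FourierMotzkin.

Section Duality.
Variables (R : realFieldType) (m n : nat) (M : 'M[R]_(m, n)) (d : 'cV[R]_m).

Lemma weak_duality (w x : 'cV[R]_n) (v : 'cV[R]_m) :
  (forall i, (M *m x) i ord0 <= d i ord0) -> (forall i, 0 <= v i ord0) -> M^T *m v = w ->
  '[w, x] <= '[d, v].
Proof.
move=> x_feas v_ge0 <-.
rewrite trmx_mul trmxK -mulmxA [X in X <= _]mxE [X in _ <= X]mxE.
by apply: ler_sum => i _; rewrite [v^T _ _]mxE [d^T _ _]mxE mulrC ler_wpM2r.
Qed.

Hypothesis M_int : forall i k, is_int (M i k).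

(* Fourier-Motzkin applied to the rows of [M x <= d] together with [- w^T x <= - t]. *)
Lemma objective_level_mults (w : 'cV[R]_n) : (forall k, is_int (w k ord0)) ->
  exists (J : finType) (y : J -> 'cV[R]_m) (c : J -> R),
  [/\ forall j, 0 <= c j /\ is_int (c j),
      forall j i, 0 <= y j i ord0 /\ is_int (y j i ord0),
      forall j, M^T *m y j = c j *: w &
      forall t, (forall j, c j * t <= '[d, y j]) ->
        exists2 x : 'cV[R]_n, forall i, (M *m x) i ord0 <= d i ord0 & t <= '[w, x]].
Proof.
move=> w_int.
pose a (r : 'I_m + 'I_1) k := if r is inl i then M i k else - w k ord0.
have [|J [mu [mu_ok mu_cancel mu_solve]]] := @exists_farkas_mults R n _ a.
  by move=> [i|?] k /=; [exact: M_int | exact: is_intN].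
exists J, (fun j => \col_i mu j (inl i)), (fun j => mu j (inr ord0)); split.
- by move=> j; exact: mu_ok.
- by move=> j i; rewrite mxE; exact: mu_ok.
- move=> j; apply/matrixP => k l; rewrite ord1 !mxE.
  under eq_bigr do rewrite !mxE mulrC.
  apply/eqP; rewrite -subr_eq0 -mulrN.
  by have := mu_cancel j k; rewrite big_sumType big_ord1 => ->.
- move=> t t_ok.
  pose b (r : 'I_m + 'I_1) := if r is inl i then d i ord0 else - t.
  have [|z z_sol] := mu_solve b.
    move=> j; rewrite big_sumType big_ord1 /= mulrN subr_ge0.
    suff -> : \sum_i mu j (inl i) * d i ord0 = '[d, \col_i mu j (inl i)] by exact: t_ok.
    by rewrite mxE; apply: eq_bigr => i _; rewrite !mxE mulrC.
  exists (\col_k z k).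
    by move=> i; rewrite mxE; under eq_bigr do rewrite mxE; exact: (z_sol (inl i)).
  rewrite mxE -lerN2 -sumrN; under eq_bigr do rewrite !mxE -mulNr.
  exact: (z_sol (inr ord0)).
Qed.

Lemma strong_duality (w : 'cV[R]_n) : (forall k, is_int (w k ord0)) ->
  (exists x : 'cV[R]_n, forall i, (M *m x) i ord0 <= d i ord0) ->
  (exists B, forall x : 'cV[R]_n, (forall i, (M *m x) i ord0 <= d i ord0) -> '[w, x] <= B) ->
  exists (x : 'cV[R]_n) (v : 'cV[R]_m) (D : int),
  [/\ forall i, (M *m x) i ord0 <= d i ord0, forall i, 0 <= v i ord0, M^T *m v = w,
      '[d, v] <= '[w, x] & 0 < D /\ forall i, is_int (D%:~R * v i ord0)].
Proof.
move=> w_int [x0 x0_feas] [B B_ub].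
have [J [y [c [c_ok y_ok y_dual y_levels]]]] := objective_level_mults w_int.
have y_ub j t : (exists2 x : 'cV[R]_n, forall i, (M *m x) i ord0 <= d i ord0 & t <= '[w, x]) ->
    c j * t <= '[d, y j].
  move=> [x x_feas t_le].
  apply: le_trans (weak_duality x_feas (fun i => (y_ok j i).1) (y_dual j)).
  by rewrite linearZ /= -scalemxAl mxE ler_wpM2l //; case: (c_ok j).
have [j1 j1_cut] : exists j, '[d, y j] < c j * (B + 1).
  apply/existsP; apply: contraT => /existsPn no_cut.
  have [x x_feas B1_le] := y_levels (B + 1) (fun j => ltac:(by rewrite leNgt no_cut)).
  by have := le_trans B1_le (B_ub x x_feas); rewrite gerDl ler10.
have c_pos : 0 < c j1.
  rewrite lt_def (c_ok j1).1 andbT; apply/eqP => c0; move: j1_cut; rewrite c0 mul0r.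
  have := y_ub j1 _ (ex_intro2 _ _ x0 x0_feas (lexx _)); rewrite c0 mul0r.
  by move=> /le_lt_trans lt /lt; rewrite ltxx.
(* the optimum is [min_{c j > 0} '[d, y j] / c j], attained by the dual [y j / c j] *)
case: (@arg_minP _ _ _ j1 (fun j => 0 < c j) (fun j => '[d, y j] / c j) c_pos).
move=> js cs_pos js_min.
have [j|x x_feas opt_le] := y_levels ('[d, y js] / c js).
  move: (c_ok j).1; rewrite le_eqVlt => /orP[/eqP cj0 | cj_pos].
    by have := y_ub j _ (ex_intro2 _ _ x0 x0_feas (lexx _)); rewrite -cj0 !mul0r.
  by rewrite mulrC -ler_pdivlMr // js_min.
have [D DE] := (c_ok js).2.
exists x, ((c js)^-1 *: y js), D; split=> //.
- by move=> i; rewrite mxE mulr_ge0 ?invr_ge0 ?(ltW cs_pos) //; case: (y_ok js i).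
- by rewrite -scalemxAr y_dual scalerA mulVf ?scale1r // lt0r_neq0.
- by apply: le_trans opt_le; rewrite -scalemxAr mxE mulrC.
- split; first by rewrite -(ltr0z R) -DE.
  by move=> i; rewrite mxE -DE mulrA mulfV ?mul1r ?lt0r_neq0 //; case: (y_ok js i).
Qed.

End Duality.

Definition int_dual_value m n (A : 'M[int]_(m, n)) (d : 'cV[int]_m) (w : 'cV[int]_n)
    (V : int) : Prop :=
  exists2 u : 'cV[int]_m, forall i, 0 <= u i ord0 & A^T *m u = w /\ '[d, u] = V.

Lemma dot_col_mx (T : pzRingType) n1 n2 (a1 : 'cV[T]_n1) (a2 : 'cV[T]_n2)
    (z : 'cV[T]_(n1 + n2)) :
  '[col_mx a1 a2, z] = '[a1, usubmx z] + '[a2, dsubmx z].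
Proof. by rewrite -{1}(vsubmxK z) tr_col_mx mul_row_col mxE. Qed.

Lemma dot_cV1 (T : pzRingType) (a z : 'cV[T]_1) : '[a, z] = a ord0 ord0 * z ord0 ord0.
Proof. by rewrite mxE big_ord1 mxE. Qed.

Definition combined_mx (T : pzRingType) m1 m2 n1 n2 (A1 : 'M[T]_(m1, n1)) (b1 : 'cV[T]_m1)
    (A2 : 'M[T]_(m2, n2)) (b2 : 'cV[T]_m2) : 'M[T]_(m1 + m2, n1 + n2 + 1) :=
  col_mx (row_mx (row_mx A1 0) b1) (row_mx (row_mx 0 A2) b2).

Section CombinedMx.
Variables (T : pzRingType) (m1 m2 n1 n2 : nat).
Variables (A1 : 'M[T]_(m1, n1)) (b1 : 'cV[T]_m1) (A2 : 'M[T]_(m2, n2)) (b2 : 'cV[T]_m2).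

Lemma combined_mx_mul (z : 'cV[T]_(n1 + n2 + 1)) :
  combined_mx A1 b1 A2 b2 *m z =
  col_mx (A1 *m usubmx (usubmx z) + b1 *m dsubmx z) (A2 *m dsubmx (usubmx z) + b2 *m dsubmx z).
Proof.
by rewrite -{1}(vsubmxK z) -{1}(vsubmxK (usubmx z)) mul_col_mx !mul_row_col !mul0mx addr0 add0r.
Qed.

Lemma combined_mx_tr_mul (v : 'cV[T]_(m1 + m2)) :
  (combined_mx A1 b1 A2 b2)^T *m v =
  col_mx (col_mx (A1^T *m usubmx v) (A2^T *m dsubmx v)) (b1^T *m usubmx v + b2^T *m dsubmx v).
Proof.
rewrite -{1}(vsubmxK v) tr_col_mx !tr_row_mx !trmx0 mul_row_col !mul_col_mx !mul0mx.
by rewrite !add_col_mx addr0 add0r.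
Qed.

End CombinedMx.

Section IntMx.
Variable R : realFieldType.

Lemma intmx_is_int m n (A : 'M[int]_(m, n)) i j : is_int (intmx R A i j).
Proof. by rewrite mxE; exact: is_int_intr. Qed.

Lemma intmx_dot m (d u : 'cV[int]_m) : '[intmx R d, intmx R u] = '[d, u]%:~R.
Proof. by rewrite /intmx map_trmx -map_mxM mxE. Qed.

Lemma intmx_col m1 m2 n (A1 : 'M[int]_(m1, n)) (A2 : 'M[int]_(m2, n)) :
  intmx R (col_mx A1 A2) = col_mx (intmx R A1) (intmx R A2).
Proof. exact: map_col_mx. Qed.

Lemma intmx_sysxy m n (A : 'M[int]_(m, n)) (b : 'cV[int]_m) :
  intmx R (sysxy A b) = row_mx (intmx R A) (intmx R b).
Proof. exact: map_row_mx. Qed.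

Lemma intmx_combined m1 m2 n1 n2 (A1 : 'M[int]_(m1, n1)) (b1 : 'cV[int]_m1)
    (A2 : 'M[int]_(m2, n2)) (b2 : 'cV[int]_m2) :
  intmx R (combined A1 b1 A2 b2) =
  combined_mx (intmx R A1) (intmx R b1) (intmx R A2) (intmx R b2).
Proof. by rewrite /intmx map_col_mx !map_row_mx !map_mx0. Qed.

End IntMx.

Lemma ler_mul01_max0 (R : realFieldType) (s t y : R) :
  0 <= y <= 1 -> s * y <= t * y + Order.max 0 (s - t).
Proof.
move=> /andP[y_ge0 y_le1]; rewrite -lerBlDl -mulrBl.
have [st_ge0 | st_lt0] := lerP 0 (s - t).
  by rewrite ler_piMr.
by rewrite nmulr_rle0.
Qed.

Section Subsystem.
Variables (R : realFieldType) (m n : nat) (A : 'M[int]_(m, n)) (b d : 'cV[int]_m).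

Lemma sysxy_dot (W : 'cV[int]_n) (S : 'cV[int]_1) (z : 'cV[R]_(n + 1)) :
  '[intmx R (col_mx W S), z] =
  '[intmx R W, usubmx z] + (S ord0 ord0)%:~R * z (rshift n ord0) ord0.
Proof.
by rewrite /intmx map_col_mx dot_col_mx dot_cV1 [map_mx _ _ _ _]mxE [dsubmx _ _ _]mxE.
Qed.

Lemma sysxy_dual_bound (W : 'cV[int]_n) (v : 'cV[R]_m) :
  (forall i, 0 <= v i ord0) -> (intmx R A)^T *m v = intmx R W ->
  forall z : 'cV[R]_(n + 1), feasible (sysxy A b) d z ->
    '[intmx R W, usubmx z] + '[intmx R b, v] * z (rshift n ord0) ord0 <= '[intmx R d, v].
Proof.
move=> v_ge0 vW z z_feas.
have := @weak_duality _ _ _ _ _ (col_mx (intmx R W) ((intmx R b)^T *m v)) _ _ z_feas v_ge0.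
rewrite dot_col_mx dot_cV1 [dsubmx _ _ _]mxE; apply.
by rewrite intmx_sysxy tr_row_mx mul_col_mx vW.
Qed.

Hypotheses (A_tdi : TDI R (sysxy A b) d) (A_y01 : implies_y01 R A b d).

Lemma tdi_sysxy_values (W : 'cV[int]_n) (t Q : R) :
  (exists z : 'cV[R]_(n + 1), feasible (sysxy A b) d z) ->
  (forall z : 'cV[R]_(n + 1), feasible (sysxy A b) d z ->
     '[intmx R W, usubmx z] + t * z (rshift n ord0) ord0 <= Q) ->
  forall s : int, exists2 V, int_dual_value (sysxy A b) d (col_mx W (const_mx s)) V &
    V%:~R <= Q + Order.max 0 (s%:~R - t).
Proof.
move=> feas t_bound s; set ws := col_mx W (const_mx s).
have obj_le z : feasible (sysxy A b) d z -> '[intmx R ws, z] <= Q + Order.max 0 (s%:~R - t).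
  move=> z_feas; rewrite sysxy_dot [const_mx _ _ _]mxE.
  have := ler_mul01_max0 s%:~R t (A_y01 z_feas); have := t_bound z z_feas; lra.
have [u [u_ge0 [uA u_opt]]] := A_tdi feas (ex_intro _ _ obj_le).
have [z [v [_ [z_feas v_ge0 vA dv_le _]]]] :=
  strong_duality (intmx_is_int R _) (fun k => intmx_is_int R ws k ord0) feas
    (ex_intro _ _ obj_le).
exists ('[d, u]); first by exists u.
rewrite -intmx_dot; apply: le_trans (u_opt v v_ge0 vA) _.
exact: le_trans dv_le (obj_le z z_feas).
Qed.

End Subsystem.

Section Combined.
Variables (R : realFieldType) (m1 m2 n1 n2 : nat).
Variables (A1 : 'M[int]_(m1, n1)) (b1 d1 : 'cV[int]_m1).
Variables (A2 : 'M[int]_(m2, n2)) (b2 d2 : 'cV[int]_m2).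

Lemma combined_feasible_split (z : 'cV[R]_(n1 + n2 + 1)) :
  feasible (combined A1 b1 A2 b2) (col_mx d1 d2) z ->
  feasible (sysxy A1 b1) d1 (col_mx (usubmx (usubmx z)) (dsubmx z)) /\
  feasible (sysxy A2 b2) d2 (col_mx (dsubmx (usubmx z)) (dsubmx z)).
Proof.
rewrite /feasible intmx_combined combined_mx_mul !intmx_sysxy !mul_row_col intmx_col.
by move=> z_feas; split=> i; [move: (z_feas (lshift m2 i)) | move: (z_feas (rshift m1 i))];
  rewrite ?col_mxEu ?col_mxEd.
Qed.

Lemma combined_dual_split (v : 'cV[R]_(m1 + m2)) (w : 'cV[int]_(n1 + n2 + 1)) :
  (intmx R (combined A1 b1 A2 b2))^T *m v = intmx R w ->
  [/\ (intmx R A1)^T *m usubmx v = intmx R (usubmx (usubmx w)),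
      (intmx R A2)^T *m dsubmx v = intmx R (dsubmx (usubmx w)) &
      '[intmx R b1, usubmx v] + '[intmx R b2, dsubmx v] = (dsubmx w ord0 ord0)%:~R].
Proof.
have wE : intmx R w = col_mx
    (col_mx (intmx R (usubmx (usubmx w))) (intmx R (dsubmx (usubmx w)))) (intmx R (dsubmx w)).
  by rewrite -!intmx_col !vsubmxK.
rewrite wE intmx_combined combined_mx_tr_mul => /eq_col_mx[/eq_col_mx[-> ->]].
by move/(congr1 (fun M : 'M[R]_1 => M ord0 ord0)); rewrite mxE [in RHS]mxE.
Qed.

Lemma combined_dual_value (w1 : 'cV[int]_n1) (w2 : 'cV[int]_n2) (s1 s2 V1 V2 : int) :
  int_dual_value (sysxy A1 b1) d1 (col_mx w1 (const_mx s1)) V1 ->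
  int_dual_value (sysxy A2 b2) d2 (col_mx w2 (const_mx s2)) V2 ->
  int_dual_value (combined A1 b1 A2 b2) (col_mx d1 d2)
    (col_mx (col_mx w1 w2) (const_mx (s1 + s2))) (V1 + V2).
Proof.
move=> [u1 u1_ge0 [u1A <-]] [u2 u2_ge0 [u2A <-]]; exists (col_mx u1 u2).
  by move=> i; rewrite -(splitK i); case: (split i) => j; rewrite ?col_mxEu ?col_mxEd.
split; last by rewrite dot_col_mx col_mxKu col_mxKd.
move: u1A u2A; rewrite [combined _ _ _ _]/(combined_mx A1 b1 A2 b2) combined_mx_tr_mul.
rewrite col_mxKu col_mxKd /sysxy !tr_row_mx !mul_col_mx.
move=> /eq_col_mx[-> ->] /eq_col_mx[-> ->]; congr col_mx.
by apply/matrixP => i j; rewrite !ord1 !mxE.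
Qed.

End Combined.

Lemma split_int_values (R : realFieldType) (P1 P2 : int -> int -> Prop) (t1 t2 Q1 Q2 : R)
    (c k : int) :
  (forall s, exists2 V, P1 s V & V%:~R <= Q1 + Order.max 0 (s%:~R - t1)) ->
  (forall s, exists2 V, P2 s V & V%:~R <= Q2 + Order.max 0 (s%:~R - t2)) ->
  t1 + t2 = c%:~R -> k%:~R <= t1 <= k%:~R + 1 ->
  exists s1 s2 V1 V2, [/\ s1 + s2 = c, P1 s1 V1, P2 s2 V2 & (V1 + V2)%:~R <= Q1 + Q2].
Proof.
move=> P1_vals P2_vals t12 /andP[k_le le_k1].
have [V1k P1k V1k_le] := P1_vals k.
have [V1k' P1k' V1k'_le] := P1_vals (k + 1).
have [V2k P2k V2k_le] := P2_vals (c - k).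
have [V2k' P2k' V2k'_le] := P2_vals (c - k - 1).
rewrite !intrD !intrN in V1k'_le V2k_le V2k'_le.
rewrite max_l ?subr_le0 // in V1k_le.
rewrite max_r in V1k'_le; last by lra.
rewrite max_r in V2k_le; last by lra.
rewrite max_l in V2k'_le; last by lra.
have [V1_lt | V1_ge] := ltP V1k V1k'.
  exists k, (c - k), V1k, V2k; split=> //; first by ring.
  have : (V1k + 1)%:~R <= V1k'%:~R :> R by rewrite ler_int lezD1.
  rewrite intrD; lra.
exists (k + 1), (c - k - 1), V1k', V2k'; split=> //; first by ring.
have : V1k'%:~R <= V1k%:~R :> R by rewrite ler_int.
rewrite intrD; lra.
Qed.

Theorem proposition3p9 (R : realFieldType) (m1 m2 n1 n2 : nat)
  (A1 : 'M[int]_(m1, n1)) (b1 d1 : 'cV[int]_m1)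
  (A2 : 'M[int]_(m2, n2)) (b2 d2 : 'cV[int]_m2) :
  TDI R (sysxy A1 b1) d1 -> TDI R (sysxy A2 b2) d2 ->
  implies_y01 R A1 b1 d1 -> implies_y01 R A2 b2 d2 ->
  TDI R (combined A1 b1 A2 b2) (col_mx d1 d2).
Proof.
move=> tdi1 tdi2 y01_1 y01_2 w feas bounded.
have [z [v [D [z_feas v_ge0 vw opt [D_gt0 Dv_int]]]]] :=
  strong_duality (intmx_is_int R _) (fun k => intmx_is_int R w k ord0) feas bounded.
have [vw1 vw2 t12] := combined_dual_split vw.
have [z1_feas z2_feas] := combined_feasible_split z_feas.
have [k kt1] : exists k : int, k%:~R <= '[intmx R b1, usubmx v] <= k%:~R + 1.
  apply: (exists_floor D_gt0); rewrite mxE mulr_sumr; apply: is_int_sum => i.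
  by rewrite !mxE mulrCA; apply: is_intM; [exact: is_int_intr | exact: Dv_int].
have v1_ge0 i : 0 <= usubmx v i ord0 by rewrite mxE.
have v2_ge0 i : 0 <= dsubmx v i ord0 by rewrite mxE.
have [s1 [s2 [V1 [V2 [s12 dual1 dual2 V12_le]]]]] := split_int_values
  (tdi_sysxy_values tdi1 y01_1 (ex_intro _ _ z1_feas) (sysxy_dual_bound v1_ge0 vw1))
  (tdi_sysxy_values tdi2 y01_2 (ex_intro _ _ z2_feas) (sysxy_dual_bound v2_ge0 vw2)) t12 kt1.
have [u u_ge0 [uw uV]] := combined_dual_value dual1 dual2.
exists u; split=> //; split.
  rewrite uw s12 -[RHS](vsubmxK w); congr col_mx; first exact: vsubmxK.
  by apply/matrixP => i j; rewrite !ord1 mxE.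
move=> v' v'_ge0 v'w; rewrite intmx_dot uV.
apply: le_trans (weak_duality z_feas v'_ge0 v'w); apply: le_trans opt.
by rewrite intmx_col dot_col_mx.
Qed.
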